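(* Let $H_0,H_1$ be complex Hilbert spaces, $G$ a densely defined closed operator from $H_0$ into $H_1$ and $D$ a densely defined closed operator from $H_1$ into $H_0$ with $-G^*\subset D$, and assume the inclusion $\mathrm{dom}(G)\subset H_0$ is compact. Let $a,a_1,a_2,\ldots\in\mathcal L(H_1)$ and $\mu>0$ with $\mathrm{Re}\,a_n\ge\mu I$ for all $n$ and $\mathrm{Re}\,a\ge\mu I$. Suppose that $(a_n)$ converges to $a$ independent of the boundary conditions. Then $(\iota^*a_n\iota)^{-1}\to(\iota^*a\iota)^{-1}$ in the weak operator topology on $\mathcal L(\mathrm{ran}(G))$.
   Context: $\mathring G=-D^*$. Domains carry graph inner products, e.g. $(u,v)_{\mathrm{dom}(G)}=(u,v)_{H_0}+(Gu,Gv)_{H_1}$. Under the compactness assumption $\mathrm{ran}(G)$ is closed in $H_1$; it carries the $H_1$-norm, $\iota\colon\mathrm{ran}(G)\hookrightarrow H_1$ is the inclusion and $\iota^*$ the orthogonal projection of $H_1$ onto $\mathrm{ran}(G)$; $\iota^*a\iota$ and $\iota^*a_n\iota$ are invertible on $\mathrm{ran}(G)$. The sequence $(a_n)$ converges to $a$ independent of the boundary conditions if for every strictly increasing $(n_k)$ in $\mathbb N$, all $f,f_k\in H_0$ and all $u,u_k\in\mathrm{dom}(G)$ with $f_k\to f$ weakly in $H_0$, $u_k\to u$ weakly in $\mathrm{dom}(G)$, and $a_{n_k}Gu_k\in\mathrm{dom}(D)$ with $-Da_{n_k}Gu_k=f_k$ for all $k$, it follows that $a_{n_k}Gu_k\to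 aGu$ weakly in $H_1$. *)

From mathcomp Require Import all_boot all_order all_algebra.
From mathcomp Require Import all_classical all_reals.
From mathcomp Require Import complex.
Set Implicit Arguments. Unset Strict Implicit. Unset Printing Implicit Defensive.
Import Order.TTheory GRing.Theory Num.Theory.
Local Open Scope ring_scope.

Definition cmod (R : realType) (z : complex R) : R :=
  Num.sqrt (complex.Re z ^+ 2 + complex.Im z ^+ 2).

Definition ccvg (R : realType) (z : nat -> complex R) (l : complex R) : Prop :=
  forall eps : R, 0 < eps -> exists N : nat, forall k, (N <= k)%N -> cmod (z k - l) < eps.

Definition hnorm (R : realType) (V : lmodType (complex R))
  (ip : V -> V -> complex R) (x : V) : R := Num.sqrt (complex.Re (ip x x)).

Definition is_hilbert (R : realType) (V : lmodType (complex R))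
  (ip : V -> V -> complex R) : Prop :=
  [/\ (forall (c : complex R) (x y z : V), ip (c *: x + y) z = c * ip x z + ip y z),
      (forall x y : V, ip y x = conjc (ip x y)),
      (forall x : V, complex.Im (ip x x) = 0 /\ 0 <= complex.Re (ip x x)),
      (forall x : V, ip x x = 0 -> x = 0) &
      (forall u : nat -> V,
         (forall eps : R, 0 < eps -> exists N : nat, forall m n, (N <= m)%N -> (N <= n)%N ->
              hnorm ip (u m - u n) < eps) ->
         exists l : V, forall eps : R, 0 < eps -> exists N : nat, forall n, (N <= n)%N ->
              hnorm ip (u n - l) < eps)].

Definition ncvg (R : realType) (V : lmodType (complex R)) (ip : V -> V -> complex R)
  (u : nat -> V) (l : V) : Prop :=
  forall eps : R, 0 < eps -> exists N : nat, forall n, (N <= n)%N -> hnorm ip (u n - l) < eps.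

Definition wcvg (R : realType) (V : lmodType (complex R)) (ip : V -> V -> complex R)
  (u : nat -> V) (l : V) : Prop :=
  forall v : V, ccvg (fun n => ip (u n) v) (ip l v).

(* An operator from V to W is given by a domain dA and a map A : V -> W
   (whose values outside dA are irrelevant). *)
Definition lin_op (R : realType) (V W : lmodType (complex R))
  (dA : V -> Prop) (A : V -> W) : Prop :=
  dA 0 /\ forall (c : complex R) (x y : V), dA x -> dA y ->
     dA (c *: x + y) /\ A (c *: x + y) = c *: A x + A y.

Definition densely_defined (R : realType) (V : lmodType (complex R))
  (ipV : V -> V -> complex R) (dA : V -> Prop) : Prop :=
  forall (x : V) (eps : R), 0 < eps -> exists y, dA y /\ hnorm ipV (x - y) < eps.

Definition closed_op (R : realType) (V W : lmodType (complex R))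
  (ipV : V -> V -> complex R) (ipW : W -> W -> complex R)
  (dA : V -> Prop) (A : V -> W) : Prop :=
  forall (x : nat -> V) (l : V) (m : W), (forall n, dA (x n)) ->
    ncvg ipV x l -> ncvg ipW (fun n => A (x n)) m -> dA l /\ A l = m.

Definition densely_defined_closed (R : realType) (V W : lmodType (complex R))
  (ipV : V -> V -> complex R) (ipW : W -> W -> complex R)
  (dA : V -> Prop) (A : V -> W) : Prop :=
  [/\ lin_op dA A, densely_defined ipV dA & closed_op ipV ipW dA A].

(* graph of the adjoint: y \in dom(A^* ) and A^* y = z *)
Definition adj_graph (R : realType) (V W : lmodType (complex R))
  (ipV : V -> V -> complex R) (ipW : W -> W -> complex R)
  (dA : V -> Prop) (A : V -> W) (y : W) (z : V) : Prop :=
  forall x : V, dA x -> ipW (A x) y = ipV x z.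

Definition graph_ip (R : realType) (V W : lmodType (complex R))
  (ipV : V -> V -> complex R) (ipW : W -> W -> complex R)
  (A : V -> W) (u v : V) : complex R := ipV u v + ipW (A u) (A v).

Definition compact_embedding (R : realType) (V W : lmodType (complex R))
  (ipV : V -> V -> complex R) (ipW : W -> W -> complex R)
  (dA : V -> Prop) (A : V -> W) : Prop :=
  forall u : nat -> V, (forall n, dA (u n)) ->
    (exists M : R, forall n, hnorm (graph_ip ipV ipW A) (u n) <= M) ->
    exists (phi : nat -> nat) (l : V), {homo phi : i j / (i < j)%N} /\
      ncvg ipV (fun k => u (phi k)) l.

Definition wcvg_dom (R : realType) (V W : lmodType (complex R))
  (ipV : V -> V -> complex R) (ipW : W -> W -> complex R)
  (dA : V -> Prop) (A : V -> W) (u : nat -> V) (l : V) : Prop :=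
  (forall n, dA (u n)) /\ dA l /\
  forall v, dA v -> ccvg (fun n => graph_ip ipV ipW A (u n) v) (graph_ip ipV ipW A l v).

Definition bounded_op (R : realType) (V : lmodType (complex R))
  (ip : V -> V -> complex R) (a : V -> V) : Prop :=
  (forall (c : complex R) (x y : V), a (c *: x + y) = c *: a x + a y) /\
  exists M : R, forall x, hnorm ip (a x) <= M * hnorm ip x.

Definition re_ge (R : realType) (V : lmodType (complex R))
  (ip : V -> V -> complex R) (a : V -> V) (mu : R) : Prop :=
  forall x : V, mu * hnorm ip x ^+ 2 <= complex.Re (ip (a x) x).

Definition ran (V W : Type) (dA : V -> Prop) (A : V -> W) (y : W) : Prop :=
  exists x, dA x /\ A x = y.

(* orthogonal projection iota^* of W onto ran(A) *)
Definition proj_ran (R : realType) (V W : lmodType (complex R))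
  (ipW : W -> W -> complex R) (dA : V -> Prop) (A : V -> W) (y : W) : W :=
  xget 0 (fun p : W => ran dA A p /\ forall q, ran dA A q -> ipW (y - p) q = 0).

(* (iota^* a iota)^{-1} y, for y in ran(A): the unique x in ran(A) with
   iota^*(a x) = y *)
Definition compr_inv (R : realType) (V W : lmodType (complex R))
  (ipW : W -> W -> complex R) (dA : V -> Prop) (A : V -> W) (a : W -> W) (y : W) : W :=
  xget 0 (fun x : W => ran dA A x /\ proj_ran ipW dA A (a x) = y).

Definition cvg_indep_bc (R : realType) (H0 H1 : lmodType (complex R))
  (ip0 : H0 -> H0 -> complex R) (ip1 : H1 -> H1 -> complex R)
  (dG : H0 -> Prop) (G : H0 -> H1) (dD : H1 -> Prop) (D : H1 -> H0)
  (an : nat -> H1 -> H1) (a : H1 -> H1) : Prop :=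
  forall (nk : nat -> nat) (f : H0) (fk : nat -> H0) (u : H0) (uk : nat -> H0),
    {homo nk : i j / (i < j)%N} ->
    wcvg ip0 fk f ->
    wcvg_dom ip0 ip1 dG G uk u ->
    (forall k, dD (an (nk k) (G (uk k))) /\ - D (an (nk k) (G (uk k))) = fk k) ->
    wcvg ip1 (fun k => an (nk k) (G (uk k))) (a (G u)).

From mathcomp Require Import all_boot all_order all_algebra.
From mathcomp Require Import all_classical all_reals.
From mathcomp Require Import complex.
From mathcomp Require Import ring lra.
From mathcomp Require Import topology normedtype sequences.
Set Implicit Arguments. Unset Strict Implicit. Unset Printing Implicit Defensive.
Import Order.TTheory GRing.Theory Num.Theory.
Import numFieldNormedType.Exports.
Local Open Scope ring_scope.

(** Compactness of dom(G) in H0 yields a Poincare inequality on (ker G)^perp,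
    so ran(G) is closed and, by Lax-Milgram, every compression iota^* b iota
    with Re b >= mu is invertible on ran(G) with inverse bounded by 1/mu.
    This uniform bound reduces the claim to x in ran(G) ∩ dom(D), which is
    dense in ran(G): the projection onto ran(G) maps dom(D) into itself, since
    -G^* ⊂ D puts everything orthogonal to ran(G) into ker(D).
    For such x let v_n = (iota^* a_n iota)^-1 x. Any subsequence of the bounded
    (v_n) has a further one converging weakly to some g in ran(G); the
    preimages of v_n in (ker G)^perp then converge weakly in dom(G), and
    a_n v_n - x, being orthogonal to ran(G), lies in ker(D), so
    -D (a_n v_n) = -D x. Convergence independent of the boundary conditions
    gives a_n v_n -> a g weakly, and projecting onto ran(G) yields
    iota^* a g = x, i.e. g = (iota^* a iota)^-1 x. *)

(** * Complex numbers and inner products *)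

Section ComplexModulus.
Variable R : realType.
Local Notation C := (complex R).

Lemma normc_cmod (z : C) : `|z| = ((cmod z)%:C)%C.
Proof. by case: z. Qed.

Lemma cmod_ge0 (z : C) : 0 <= cmod z.
Proof. exact: sqrtr_ge0. Qed.

Lemma cmodM (a b : C) : cmod (a * b) = cmod a * cmod b.
Proof. by apply: complexI; rewrite rmorphM /= -!normc_cmod normrM. Qed.

Lemma ler_cmodD (a b : C) : cmod (a + b) <= cmod a + cmod b.
Proof. by rewrite -lecR rmorphD /= -!normc_cmod ler_normD. Qed.

Lemma cmodN (a : C) : cmod (- a) = cmod a.
Proof. by apply: complexI; rewrite -!normc_cmod normrN. Qed.

Lemma cmod_distC (a b : C) : cmod (a - b) = cmod (b - a).
Proof. by rewrite -cmodN opprB. Qed.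

Lemma cmod0 : cmod (0 : C) = 0.
Proof. by apply: complexI; rewrite -normc_cmod normr0. Qed.

Lemma cmod_eq0 (a : C) : cmod a = 0 -> a = 0.
Proof. by move=> h; apply/eqP; rewrite -normr_eq0 normc_cmod h. Qed.

Lemma cmod_real (x : R) : cmod (x%:C)%C = `|x|.
Proof. by rewrite /cmod /= expr0n /= addr0 sqrtr_sqr. Qed.

Lemma abs_Re_le_cmod (a : C) : `|complex.Re a| <= cmod a.
Proof. by rewrite -lecR -normc_cmod; apply: normc_ge_Re. Qed.

Lemma abs_Im_le_cmod (a : C) : `|complex.Im a| <= cmod a.
Proof. by case: a => x y; rewrite /cmod /= -sqrtr_sqr ler_wsqrtr // lerDr sqr_ge0. Qed.

Lemma cmod_le_ReIm (a : C) : cmod a <= `|complex.Re a| + `|complex.Im a|.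
Proof.
case: a => x y; rewrite /cmod /=.
rewrite -(@ler_pXn2r _ 2) ?nnegrE ?sqrtr_ge0 ?addr_ge0 // sqr_sqrtr ?addr_ge0 ?sqr_ge0 //.
rewrite sqrrD !real_normK ?num_real // -addrA lerD2l lerDr mulrn_wge0 // mulr_ge0 //.
Qed.

Lemma cmod_sqr (a : C) : ((cmod a ^+ 2)%:C)%C = a * conjc a.
Proof. by rewrite rmorphXn /= -normc_cmod sqr_normc. Qed.

Lemma ReD (a b : C) : complex.Re (a + b) = complex.Re a + complex.Re b.
Proof. by case: a; case: b. Qed.

Lemma ReN (a : C) : complex.Re (- a) = - complex.Re a.
Proof. by case: a. Qed.

Lemma ReJ (a : C) : complex.Re (conjc a) = complex.Re a.
Proof. by case: a. Qed.

End ComplexModulus.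

Section InnerProduct.
Variable R : realType.
Local Notation C := (complex R).
Variable V : lmodType C.
Variable ip : V -> V -> C.
Hypothesis hV : is_hilbert ip.
Local Notation nm := (hnorm ip).

Lemma ip_linear c x y z : ip (c *: x + y) z = c * ip x z + ip y z.
Proof. by case: hV => h _ _ _ _; apply: h. Qed.

Lemma ipC x y : ip y x = conjc (ip x y).
Proof. by case: hV => _ h _ _ _; apply: h. Qed.

Lemma ip_def x : ip x x = 0 -> x = 0.
Proof. by case: hV => _ _ _ h _; apply: h. Qed.

Lemma ip0l z : ip 0 z = 0.
Proof.
have := ip_linear 1 0 0 z; rewrite scaler0 addr0 mul1r => h.
by apply: (addrI (ip 0 z)); rewrite addr0 -h.
Qed.

Lemma ipDl x y z : ip (x + y) z = ip x z + ip y z.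
Proof. by have := ip_linear 1 x y z; rewrite scale1r mul1r. Qed.

Lemma ipZl c x z : ip (c *: x) z = c * ip x z.
Proof. by rewrite -[c *: x]addr0 ip_linear ip0l addr0. Qed.

Lemma ipNl x z : ip (- x) z = - ip x z.
Proof. by rewrite -scaleN1r ipZl mulN1r. Qed.

Lemma ipBl x y z : ip (x - y) z = ip x z - ip y z.
Proof. by rewrite ipDl ipNl. Qed.

Lemma ip0r z : ip z 0 = 0.
Proof. by rewrite ipC ip0l conjc0. Qed.

Lemma ipDr x y z : ip z (x + y) = ip z x + ip z y.
Proof. by rewrite ipC ipDl rmorphD /= -!ipC. Qed.

Lemma ipZr c x z : ip z (c *: x) = conjc c * ip z x.
Proof. by rewrite ipC ipZl rmorphM /= -ipC. Qed.

Lemma ipNr x z : ip z (- x) = - ip z x.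
Proof. by rewrite ipC ipNl rmorphN /= -ipC. Qed.

Lemma ipBr x y z : ip z (x - y) = ip z x - ip z y.
Proof. by rewrite ipDr ipNr. Qed.

Lemma ip_orthC x y : ip x y = 0 -> ip y x = 0.
Proof. by move=> h; rewrite ipC h conjc0. Qed.

Lemma hnorm_ge0 x : 0 <= nm x.
Proof. exact: sqrtr_ge0. Qed.

Lemma hnorm_sqr x : nm x ^+ 2 = complex.Re (ip x x).
Proof. by rewrite /hnorm sqr_sqrtr //; case: hV => _ _ /(_ x) []. Qed.

Lemma ip_self x : ip x x = ((nm x ^+ 2)%:C)%C.
Proof.
rewrite hnorm_sqr; case: hV => _ _ /(_ x) [+ _].
by case: (ip x x) => a b /= ->.
Qed.

Lemma hnorm0 : nm 0 = 0.
Proof. by rewrite /hnorm ip0l /= sqrtr0. Qed.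

Lemma hnorm_eq0 x : nm x = 0 -> x = 0.
Proof. by move=> h; apply: ip_def; rewrite ip_self h expr0n. Qed.

Lemma hnormZ c x : nm (c *: x) = cmod c * nm x.
Proof.
apply/eqP; rewrite -(@eqrXn2 _ 2) // ?mulr_ge0 ?cmod_ge0 ?hnorm_ge0 //.
apply/eqP; apply: complexI.
by rewrite -ip_self ipZl ipZr ip_self exprMn [RHS]rmorphM /= cmod_sqr mulrA.
Qed.

Lemma hnormN x : nm (- x) = nm x.
Proof. by rewrite -scaleN1r hnormZ cmodN -(rmorph1 (real_complex R)) cmod_real normr1 mul1r. Qed.

Lemma hnorm_distC x y : nm (x - y) = nm (y - x).
Proof. by rewrite -hnormN opprB. Qed.

Lemma hnormD_sqr x y :
  nm (x + y) ^+ 2 = nm x ^+ 2 + nm y ^+ 2 + 2 * complex.Re (ip x y).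
Proof.
rewrite !hnorm_sqr ipDl !ipDr !ReD [ip y x]ipC ReJ.
by rewrite mulr2n mulrDl mul1r; lra.
Qed.

Lemma cauchy_schwarz x y : cmod (ip x y) <= nm x * nm y.
Proof.
have [->|y0] := eqVneq y 0; first by rewrite ip0r hnorm0 cmod0 mulr0.
have b0 : nm y ^+ 2 != 0.
  by rewrite expf_eq0 /=; apply/eqP => /hnorm_eq0 /eqP; rewrite (negbTE y0).
have b0C : ((nm y ^+ 2)%:C)%C != 0 :> C by rewrite eq_complex /= negb_and b0.
set t := ip x y / ((nm y ^+ 2)%:C)%C.
(* t y is the projection of x onto the line through y *)
have pyth : ip (x - t *: y) (x - t *: y) =
    ip x x - ip x y * conjc (ip x y) / ((nm y ^+ 2)%:C)%C.
  have cjt : conjc t = conjc (ip x y) / ((nm y ^+ 2)%:C)%C.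
    by rewrite /t (rmorphM conjc) fmorphV /= oppr0.
  rewrite ipBl !ipBr !ipZl !ipZr [ip y x]ipC [ip y y]ip_self cjt /t.
  by move: b0C; generalize ((nm y ^+ 2)%:C)%C (ip x y) (conjc (ip x y)) => b z w hb; field.
have : 0 <= ip (x - t *: y) (x - t *: y) by rewrite ip_self lecR sqr_ge0.
rewrite pyth -cmod_sqr subr_ge0 ip_self.
have hb : 0 < ((nm y ^+ 2)%:C)%C :> C by rewrite ltcR lt_def b0 sqr_ge0.
rewrite ler_pdivrMr // -!rmorphM /= lecR -exprMn => h.
by rewrite -(@ler_pXn2r _ 2) ?nnegrE ?cmod_ge0 ?mulr_ge0 ?hnorm_ge0 // mulrC.
Qed.

Lemma ler_hnormD x y : nm (x + y) <= nm x + nm y.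
Proof.
rewrite -(@ler_pXn2r _ 2) ?nnegrE ?addr_ge0 ?hnorm_ge0 //.
have h : complex.Re (ip x y) <= nm x * nm y.
  by apply: le_trans (cauchy_schwarz x y); apply: le_trans (abs_Re_le_cmod _); exact: ler_norm.
rewrite hnormD_sqr sqrrD mulr2n; lra.
Qed.

Lemma ler_hdistD x y z : nm (x - z) <= nm (x - y) + nm (y - z).
Proof. by have := ler_hnormD (x - y) (y - z); rewrite addrA subrK. Qed.

Lemma parallelogram x y :
  nm (x + y) ^+ 2 + nm (x - y) ^+ 2 = 2 * nm x ^+ 2 + 2 * nm y ^+ 2.
Proof. by rewrite !hnormD_sqr hnormN ipNr ReN; lra. Qed.

End InnerProduct.

(** * Sequences *)

Section LimsupLe0.
Variable R : realType.

Definition limsup_le0 (r : nat -> R) :=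
  forall eps : R, 0 < eps -> exists N : nat, forall n, (N <= n)%N -> r n < eps.

Lemma limsup_le0_inv : limsup_le0 (fun n => (n.+1%:R)^-1).
Proof.
move=> e e0; exists (Num.bound e^-1) => n hn.
rewrite -(invrK e) ltf_pV2 ?posrE ?invr_gt0 ?ltr0Sn //.
apply: lt_le_trans (archi_boundP _) _; first by rewrite invr_ge0 ltW.
by rewrite ler_nat (leq_trans hn).
Qed.

Lemma limsup_le0_le (r s : nat -> R) :
  (forall n, r n <= s n) -> limsup_le0 s -> limsup_le0 r.
Proof. by move=> h hs e /hs [N hN]; exists N => n /hN; exact: le_lt_trans. Qed.

Lemma limsup_le0D (r s : nat -> R) :
  limsup_le0 r -> limsup_le0 s -> limsup_le0 (fun n => r n + s n).
Proof.
move=> hr hs e e0; have e2 : 0 < e / 2 by rewrite divr_gt0.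
have [N1 h1] := hr _ e2; have [N2 h2] := hs _ e2.
exists (maxn N1 N2) => n hn; rewrite [e](splitr e).
by apply: ltrD; [apply: h1 | apply: h2]; apply: leq_trans hn; rewrite ?leq_maxl ?leq_maxr.
Qed.

Lemma limsup_le0Z (K : R) (r : nat -> R) :
  0 <= K -> limsup_le0 r -> limsup_le0 (fun n => K * r n).
Proof.
move=> K0 hr e e0; have K1 : 0 < K + 1 by rewrite ltr_pwDr.
have [N h] := hr _ (divr_gt0 e0 K1); exists N => n /h hn.
have [rn0|rn0] := lerP 0 (r n); last by apply: le_lt_trans e0; rewrite mulr_ge0_le0 // ltW.
apply: le_lt_trans (_ : K * r n <= (K + 1) * r n) _; first by rewrite ler_wpM2r // lerDl.
by rewrite mulrC -ltr_pdivlMr.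
Qed.

Lemma limsup_le0_lb (x : R) (r : nat -> R) :
  limsup_le0 r -> (forall n, x <= r n) -> x <= 0.
Proof.
move=> hr h; apply/ler_addgt0Pr => e /hr [N hN]; rewrite add0r.
exact: le_trans (h N) (ltW (hN N (leqnn N))).
Qed.

End LimsupLe0.

Definition incr (s : nat -> nat) := {homo s : i j / (i < j)%N}.

Lemma incr_succ s : (forall k, (s k < s k.+1)%N) -> incr s.
Proof.
move=> hs i; elim=> // j IH; rewrite ltnS leq_eqVlt => /orP [/eqP -> | /IH h].
  exact: hs.
exact: ltn_trans h (hs j).
Qed.

Lemma incr_geid s : incr s -> forall k, (k <= s k)%N.
Proof. by move=> hs; elim=> // k ih; apply: leq_ltn_trans ih (hs _ _ _). Qed.

Lemma incr_comp s t : incr s -> incr t -> incr (fun k => s (t k)).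
Proof. by move=> hs ht i j /ht /hs. Qed.

Lemma limsup_le0_subseq (R : realType) (r : nat -> R) s :
  incr s -> limsup_le0 r -> limsup_le0 (fun k => r (s k)).
Proof.
move=> hs hr e /hr [N h]; exists N => k hk; apply: h.
exact: leq_trans hk (incr_geid hs k).
Qed.

Lemma extract_subseq (Q : nat -> Prop) :
  (forall N, exists2 n, (N <= n)%N & Q n) -> exists s, incr s /\ forall k, Q (s k).
Proof.
move=> hQ; have /choice [f hf] : forall N, exists n, (N <= n)%N /\ Q n.
  by move=> N; have [n] := hQ N; exists n.
pose s := fix s k := if k is k'.+1 then f (s k').+1 else f 0%N.
exists s; split; first by apply: incr_succ => k /=; exact: (hf _).1.
by case=> [|k]; exact: (hf _).2.
Qed.

Lemma diagonal_subseq (P : nat -> (nat -> nat) -> Prop) :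
  (forall j s t, incr t -> P j s -> P j (fun k => s (t k))) ->
  (forall j s m, P j (fun k => s (k + m)%N) -> P j s) ->
  (forall j s, incr s -> exists t, incr t /\ P j (fun k => s (t k))) ->
  exists phi, incr phi /\ forall j, P j phi.
Proof.
move=> Psub Ptail Pext.
have /choice [E hE] : forall js : nat * (nat -> nat), exists t, incr t /\
    (incr js.2 -> P js.1 (fun k => js.2 (t k))).
  move=> [j s]; have [hs|hs] := pselect (incr s).
    by have [t [ti tp]] := Pext j s hs; exists t.
  by exists id; split => // /hs.
pose Psi := fix Psi j := if j is j'.+1 then fun k => Psi j' (E (j, Psi j') k)
                         else E (0%N, id).
have Psi_incr j : incr (Psi j).
  by elim: j => [|j ih]; [exact: (hE _).1 | exact: incr_comp ih (hE _).1].
have Psi_P j : P j (Psi j).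
  by case: j => [|j]; [apply: (hE (0%N, id)).2 | exact: (hE (j.+1, Psi j)).2 (Psi_incr j)].
pose T j := fix T d := if d is d'.+1 then fun k => T d' (E ((j + d').+1, Psi (j + d')) k)
                       else id.
have T_incr j d : incr (T j d).
  by elim: d => [|d ih] //; exact: incr_comp ih (hE _).1.
have PsiT j d k : Psi (j + d)%N k = Psi j (T j d k).
  by elim: d k => [|d ih] k; rewrite ?addn0 // addnS /= ih.
have geE js k : (k <= E js k)%N by exact: incr_geid (hE js).1 k.
(* From index j on, the diagonal k |-> Psi k k is a subsequence of Psi j. *)
exists (fun k => Psi k k); split.
  by apply: incr_succ => k /=; apply: Psi_incr; exact: geE.
move=> j; apply: (Ptail j _ j).
have -> : (fun k => Psi (k + j)%N (k + j)%N) = (fun k => Psi j (T j k (k + j)%N)).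
  by apply: funext => k; rewrite addnC PsiT addnC.
apply: Psub (Psi_P j); apply: incr_succ => k /=.
by apply: T_incr; apply: leq_trans (geE _ _); rewrite addSn.
Qed.

Section ComplexSequences.
Variable R : realType.
Local Notation C := (complex R).

Lemma ccvg_subseq (z : nat -> C) l s : incr s -> ccvg z l -> ccvg (fun k => z (s k)) l.
Proof. exact: limsup_le0_subseq. Qed.

Lemma ccvg_tail (z : nat -> C) l m : ccvg (fun k => z (k + m)%N) l -> ccvg z l.
Proof.
move=> h e /h [N hN]; exists (N + m)%N => n hn.
have mn : (m <= n)%N by apply: leq_trans hn; rewrite leq_addl.
have -> : n = (n - m + m)%N by rewrite subnK.
by apply: hN; rewrite leq_subRL // addnC.
Qed.

Lemma ccvg_cst (l : C) : ccvg (fun _ => l) l.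
Proof. by move=> e e0; exists 0%N => n _; rewrite subrr cmod0. Qed.

Lemma ccvg_ext (z w : nat -> C) l : (forall n, z n = w n) -> ccvg z l -> ccvg w l.
Proof. by move=> e; apply: limsup_le0_le => n; rewrite e. Qed.

Lemma ccvgD (z w : nat -> C) a b :
  ccvg z a -> ccvg w b -> ccvg (fun n => z n + w n) (a + b).
Proof.
move=> hz hw; apply: limsup_le0_le (limsup_le0D hz hw) => n.
by rewrite opprD addrACA; apply: ler_cmodD.
Qed.

Lemma ccvgMl (c : C) (z : nat -> C) a : ccvg z a -> ccvg (fun n => c * z n) (c * a).
Proof.
move=> hz; apply: limsup_le0_le (limsup_le0Z (cmod_ge0 c) hz) => n.
by rewrite -mulrBr cmodM.
Qed.

Lemma ccvg_unique (z : nat -> C) a b : ccvg z a -> ccvg z b -> a = b.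
Proof.
move=> ha hb; apply/eqP; rewrite -subr_eq0; apply/eqP; apply: cmod_eq0.
apply/eqP; rewrite eq_le cmod_ge0 andbT; apply: (limsup_le0_lb (limsup_le0D ha hb)) => n.
by have := ler_cmodD (a - z n) (z n - b); rewrite addrA subrK [cmod (a - z n)]cmod_distC.
Qed.

Lemma ccvg_cmod_le (z : nat -> C) a (K : R) :
  ccvg z a -> (forall n, cmod (z n) <= K) -> cmod a <= K.
Proof.
move=> ha hK; rewrite -subr_le0; apply: (limsup_le0_lb ha) => n.
have := ler_cmodD (a - z n) (z n); rewrite subrK cmod_distC => h.
by have := hK n; lra.
Qed.

Lemma bolzano_weierstrass_complex (z : nat -> C) (K : R) :
  (forall n, cmod (z n) <= K) -> exists s, incr s /\ exists l, ccvg (fun k => z (s k)) l.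
Proof.
have BW (u : nat -> R) : (forall n, `|u n| <= K) ->
    exists s, incr s /\ exists l, limsup_le0 (fun k => `|u (s k) - l|).
  move=> hu; have [|s si /cvgrPdist_lt hs] := @bolzano_weierstrass _ u.
    exists K; split; first exact: num_real.
    by move=> x Kx y _; apply: le_trans (hu y) (ltW Kx).
  exists s; split; first by move=> i j; rewrite !ltnNge -si.
  by exists (limn (u \o s)) => e /hs [N _ hN]; exists N => n hn; rewrite distrC; exact: hN.
move=> hK.
have [s1 [s1i [lr hr]]] := BW _ (fun n => le_trans (abs_Re_le_cmod (z n)) (hK n)).
have [s2 [s2i [li hi]]] := BW _ (fun n => le_trans (abs_Im_le_cmod (z (s1 n))) (hK _)).
exists (fun k => s1 (s2 k)); split; first exact: incr_comp.
exists (Complex lr li); apply: limsup_le0_le (limsup_le0D (limsup_le0_subseq s2i hr) hi) => n.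
by apply: le_trans (cmod_le_ReIm _) _; case: (z (s1 (s2 n))).
Qed.

Lemma ccauchy_cvg (z : nat -> C) :
  (forall e : R, 0 < e -> exists N : nat,
     forall m n, (N <= m)%N -> (N <= n)%N -> cmod (z m - z n) < e) ->
  (exists K, forall n, cmod (z n) <= K) -> exists l, ccvg z l.
Proof.
move=> hc [K /bolzano_weierstrass_complex [s [si [l hl]]]].
exists l => e e0; have e2 : 0 < e / 2 by rewrite divr_gt0.
have [N1 h1] := hc _ e2; have [N2 h2] := hl _ e2.
exists N1 => n hn; set k := maxn N1 N2.
have a1 := h1 n (s k) hn (leq_trans (leq_maxl _ _) (incr_geid si k)).
have a2 := h2 k (leq_maxr _ _).
have := ler_cmodD (z n - z (s k)) (z (s k) - l); rewrite addrA subrK; lra.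
Qed.

Lemma ccvg_subseq_subseq (z : nat -> C) l :
  (forall s, incr s -> exists t, incr t /\ ccvg (fun k => z (s (t k))) l) -> ccvg z l.
Proof.
move=> h; apply: contrapT => nzl.
have [e e0 he] : exists2 e : R, 0 < e & forall N, exists2 n, (N <= n)%N & e <= cmod (z n - l).
  apply: contrapT => ne; apply: nzl => e e0; apply: contrapT => nN; apply: ne; exists e => // N.
  apply: contrapT => nn; apply: nN; exists N => n hn; rewrite ltNge; apply/negP => hen.
  by apply: nn; exists n.
have [s [si hs]] := extract_subseq he.
have [t [ti /(_ e e0) [N hN]]] := h s si.
by have := hN N (leqnn N); rewrite ltNge hs.
Qed.

Lemma ccvg_approx (z : nat -> C) l :
  (forall e : R, 0 < e -> exists z' l', [/\ ccvg z' l', cmod (l - l') <= e &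
                                         forall n, cmod (z n - z' n) <= e]) ->
  ccvg z l.
Proof.
move=> h e e0; have e3 : 0 < e / 3 by rewrite divr_gt0.
have [z' [l' [hz' hl hzz]]] := h _ e3; have [N hN] := hz' _ e3.
exists N => n hn; have := hN n hn; have := hzz n; rewrite cmod_distC in hl.
have := ler_cmodD (z n - z' n) (z' n - l'); rewrite addrA subrK.
have := ler_cmodD (z n - l') (l' - l); rewrite addrA subrK; lra.
Qed.

End ComplexSequences.

(** * Hilbert spaces *)

Section HilbertSpace.
Variable R : realType.
Local Notation C := (complex R).
Variable V : lmodType C.
Variable ip : V -> V -> C.
Hypothesis hV : is_hilbert ip.
Local Notation nm := (hnorm ip).

Definition hcauchy (u : nat -> V) := forall eps : R, 0 < eps -> exists N : nat,
  forall m n, (N <= m)%N -> (N <= n)%N -> nm (u m - u n) < eps.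

Lemma hcauchy_cvg u : hcauchy u -> exists l, ncvg ip u l.
Proof. by case: hV => _ _ _ _; apply. Qed.

Lemma ncvg_unique u a b : ncvg ip u a -> ncvg ip u b -> a = b.
Proof.
move=> ha hb; apply/eqP; rewrite -subr_eq0; apply/eqP; apply: (hnorm_eq0 hV).
apply/eqP; rewrite eq_le hnorm_ge0 andbT; apply: (limsup_le0_lb (limsup_le0D ha hb)) => n.
by have := ler_hdistD hV a (u n) b; rewrite [nm (a - u n)](hnorm_distC hV).
Qed.

Lemma ccvg_ipl u l v : ncvg ip u l -> ccvg (fun n => ip (u n) v) (ip l v).
Proof.
move=> h; apply: limsup_le0_le (limsup_le0Z (hnorm_ge0 ip v) h) => n.
by rewrite -(ipBl hV) mulrC; apply: cauchy_schwarz.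
Qed.

Definition closed_subspace (M : V -> Prop) := [/\ M 0,
  forall c x y, M x -> M y -> M (c *: x + y) &
  forall u l, (forall n, M (u n)) -> ncvg ip u l -> M l].

Section ClosedSubspace.
Variable M : V -> Prop.
Hypothesis hM : closed_subspace M.

Lemma closed_subspace0 : M 0.
Proof. by case: hM. Qed.

Lemma closed_subspaceD x y : M x -> M y -> M (x + y).
Proof. by case: hM => _ hlin _ hx hy; rewrite -[x]scale1r; apply: hlin. Qed.

Lemma closed_subspaceZ c x : M x -> M (c *: x).
Proof. by case: hM => h0 hlin _ hx; rewrite -[c *: x]addr0; apply: hlin. Qed.

Lemma closed_subspaceB x y : M x -> M y -> M (x - y).
Proof. by move=> hx hy; rewrite -scaleN1r addrC; case: hM => _ hlin _; apply: hlin. Qed.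

Lemma min_dist_orth y p : M p -> (forall q, M q -> nm (y - p) <= nm (y - q)) ->
  forall q, M q -> ip (y - p) q = 0.
Proof.
move=> Mp hmin q Mq; set w := y - p; set z := ip w q.
(* comparing y - p with y - (p + s z q) for small s > 0 *)
have key s : 0 < s -> 2 * cmod z ^+ 2 <= s * (cmod z ^+ 2 * nm q ^+ 2).
  move=> s0; set t : C := (s%:C)%C * z.
  have := hmin _ (closed_subspaceD Mp (closed_subspaceZ t Mq)).
  have -> : y - (p + t *: q) = w + - (t *: q) by rewrite /w opprD addrA.
  rewrite -(ler_pXn2r (_ : (0 < 2)%N)) ?nnegrE ?hnorm_ge0 //.
  rewrite [nm (w + _) ^+ 2](hnormD_sqr hV) (hnormN hV) (hnormZ hV) (ipNr hV) (ipZr hV).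
  have -> : cmod t = s * cmod z by rewrite cmodM cmod_real ger0_norm // ltW.
  have -> : complex.Re (- (conjc t * z)) = - (s * cmod z ^+ 2).
    rewrite ReN /t (rmorphM conjc) /= oppr0 -mulrA [conjc z * z]mulrC -cmod_sqr.
    by rewrite complexr0 -rmorphM.
  rewrite !exprMn => h.
  have : s * (2 * cmod z ^+ 2) <= s * (s * (cmod z ^+ 2 * nm q ^+ 2)) by nra.
  by rewrite ler_pM2l.
have q0 : 0 <= nm q ^+ 2 by rewrite sqr_ge0.
have s0 : 0 < (nm q ^+ 2 + 1)^-1 by rewrite invr_gt0 ltr_pwDr.
have cz0 : 0 <= cmod z ^+ 2 by rewrite sqr_ge0.
have hs : (nm q ^+ 2 + 1)^-1 * (cmod z ^+ 2 * nm q ^+ 2) <= cmod z ^+ 2.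
  rewrite mulrCA ler_piMr // mulrC ler_pdivrMr ?ltr_pwDr // mul1r lerDl //.
have := key _ s0 => h3.
have : cmod z ^+ 2 == 0 by rewrite eq_le sqr_ge0 andbT; lra.
by rewrite expf_eq0 /= => /eqP /cmod_eq0.
Qed.

Lemma minimizing_hcauchy y d (m : nat -> V) :
  (forall q, M q -> d <= nm (y - q)) ->
  (forall n, M (m n) /\ nm (y - m n) < d + (n.+1%:R)^-1) -> hcauchy m.
Proof.
move=> dlb hm eps e0.
have d0 : 0 <= d.
  rewrite -oppr_le0; apply: (limsup_le0_lb (@limsup_le0_inv R)) => n.
  rewrite -subr_ge0 opprK addrC; exact: ltW (le_lt_trans (hnorm_ge0 ip _) (hm n).2).
(* for i <= 1, 2 (d + i)^2 - 2 d^2 <= (4 d + 2) i: hence the constant 8 d + 4 *)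
have del0 : 0 < eps ^+ 2 / (8 * d + 4) by rewrite divr_gt0 ?exprn_gt0 //; lra.
have [N hN] := limsup_le0_inv del0.
exists N => a b ha hb.
have ea := hN a ha; have eb := hN b hb.
have ea0 : 0 < (a.+1%:R : R)^-1 by rewrite invr_gt0.
have eb0 : 0 < (b.+1%:R : R)^-1 by rewrite invr_gt0.
have ea1 : (a.+1%:R : R)^-1 <= 1 by rewrite invf_le1 // (ler_nat _ 1).
have eb1 : (b.+1%:R : R)^-1 <= 1 by rewrite invf_le1 // (ler_nat _ 1).
set mid := (2%:R^-1 : C) *: (m a + m b).
have hmid := dlb _ (closed_subspaceZ _ (closed_subspaceD (hm a).1 (hm b).1)) : d <= nm (y - mid).
(* the parallelogram law for y - m a and y - m b, whose half-sum is y - mid *)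
have par := parallelogram hV (y - m a) (y - m b).
have e1 : (y - m a) - (y - m b) = m b - m a by rewrite opprB addrC addrA subrK.
have e2 : (y - m a) + (y - m b) = (2%:R : C) *: (y - mid).
  rewrite scalerBr /mid scalerA mulfV ?pnatr_eq0 // scale1r scaler_nat mulr2n.
  by rewrite opprD !addrA; congr (_ - _); rewrite -!addrA; congr (_ + _); rewrite addrC.
rewrite e1 e2 (hnormZ hV) -(rmorph_nat (real_complex R)) cmod_real ger0_norm // in par.
rewrite (hnorm_distC hV (m b)) in par.
have ha2 := (hm a).2; have hb2 := (hm b).2.
set ia := (a.+1%:R : R)^-1 in ea ea0 ea1 ha2 *.
set ib := (b.+1%:R : R)^-1 in eb eb0 eb1 hb2 *.
have n1 := hnorm_ge0 ip (y - m a); have n2 := hnorm_ge0 ip (y - m b).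
have sqa : nm (y - m a) ^+ 2 <= (d + ia) ^+ 2 by rewrite ler_pXn2r ?nnegrE //; lra.
have sqb : nm (y - m b) ^+ 2 <= (d + ib) ^+ 2 by rewrite ler_pXn2r ?nnegrE //; lra.
have sqm : (2 * d) ^+ 2 <= (2 * nm (y - mid)) ^+ 2 by rewrite ler_pXn2r ?nnegrE //; lra.
have : nm (m a - m b) ^+ 2 < eps ^+ 2.
  have : (8 * d + 4) * (eps ^+ 2 / (8 * d + 4)) = eps ^+ 2.
    by rewrite mulrC divfK //; apply/eqP => h; lra.
  nra.
by rewrite ltr_pXn2r ?nnegrE ?hnorm_ge0 ?ltW.
Qed.

Lemma orth_proj_exists y : exists p, M p /\ forall q, M q -> ip (y - p) q = 0.
Proof.
have [M0 _ Mcl] := hM.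
pose E : set R := fun r => exists m, M m /\ r = nm (y - m).
have hE : has_inf E.
  split; first by exists (nm (y - 0)); exists 0.
  by exists 0 => r [m [_ ->]]; apply: hnorm_ge0.
have dlb m : M m -> inf E <= nm (y - m) by move=> Mm; apply: (ge_inf hE.2); exists m.
have /choice [m hm] : forall n : nat, exists m, M m /\ nm (y - m) < inf E + (n.+1%:R)^-1.
  move=> n; have en : 0 < (n.+1%:R : R)^-1 by rewrite invr_gt0.
  by have [r [m [Mm ->]] hr] := inf_adherent en hE; exists m.
have [p hp] := hcauchy_cvg (minimizing_hcauchy dlb hm).
have Mp : M p := Mcl _ _ (fun n => (hm n).1) hp.
exists p; split => //; apply: min_dist_orth => // q Mq.
apply: le_trans (dlb _ Mq); rewrite -subr_le0.
apply: (limsup_le0_lb (limsup_le0D (@limsup_le0_inv R) hp)) => n.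
have := ler_hdistD hV y (m n) p; have := (hm n).2; set i := (n.+1%:R : R)^-1; lra.
Qed.

End ClosedSubspace.

Lemma riesz (L : V -> C) :
  (forall c x y, L (c *: x + y) = conjc c * L x + L y) ->
  (exists K, forall x, cmod (L x) <= K * nm x) ->
  exists g, forall y, L y = ip g y.
Proof.
move=> Llin [K LK].
have LD x y : L (x + y) = L x + L y by rewrite -[x]scale1r Llin conjc1 mul1r scale1r.
have L0 : L 0 = 0 by apply: (addrI (L 0)); rewrite -LD !addr0.
have LZ c x : L (c *: x) = conjc c * L x by rewrite -[c *: x]addr0 Llin L0 addr0.
have LB x y : L (x - y) = L x - L y by rewrite LD -scaleN1r LZ rmorphN1 mulN1r.
have hK : closed_subspace (fun y => L y = 0).
  split => [//|c x y hx hy|u l hu hl]; first by rewrite /= Llin hx hy mulr0 addr0.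
  apply: cmod_eq0; apply/eqP; rewrite eq_le cmod_ge0 andbT.
  apply: (limsup_le0_lb (limsup_le0Z (normr_ge0 K) hl)) => n.
  rewrite -(hnormN hV) opprB -[L l]subr0 -(hu n) -LB.
  by apply: le_trans (LK _) _; rewrite ler_wpM2r ?hnorm_ge0 ?ler_norm.
have [Lz|/existsNP [y0 Ly0]] := pselect (forall y, L y = 0).
  by exists 0 => y; rewrite Lz (ip0l hV).
have [p [Kp hp]] := orth_proj_exists hK y0.
set z := y0 - p.
have Lz : L z <> 0 by rewrite /z LB Kp subr0.
have z0C : ((nm z ^+ 2)%:C)%C != 0 :> C.
  rewrite eq_complex /= negb_and expf_eq0 /=; apply/orP; left; apply/eqP.
  by move=> /(hnorm_eq0 hV) h; apply: Lz; rewrite h L0.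
(* the representing vector is along z, the normal direction of ker L *)
exists ((L z / ((nm z ^+ 2)%:C)%C) *: z) => y.
have := hp (conjc (L y) *: z - conjc (L z) *: y).
rewrite LB !LZ !conjcK mulrC subrr => /(_ erefl).
rewrite -/z (ipBr hV) !(ipZr hV) !conjcK (ip_self hV z) (ipZl hV) => h.
apply: (mulfI z0C); rewrite mulrA mulrCA divff // mulr1 -[LHS]mulrC.
by apply/eqP; rewrite -subr_eq0 h.
Qed.

Lemma closed_subspace_wclosed M (v : nat -> V) g : closed_subspace M ->
  (forall k, M (v k)) -> wcvg ip v g -> M g.
Proof.
move=> hM Mv hg; have [p [Mp hp]] := orth_proj_exists hM g.
have g0 : ip g (g - p) = 0.
  apply: (ccvg_unique (hg (g - p))); apply: ccvg_ext (ccvg_cst 0) => k.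
  by rewrite (ip_orthC hV) ?hp.
suff <- : p = g by [].
apply/eqP; rewrite eq_sym -subr_eq0; apply/eqP; apply: (ip_def hV).
by rewrite (ipBl hV) g0 (ip_orthC hV) ?hp // subrr.
Qed.

Inductive span_seq (v : nat -> V) : V -> Prop :=
  | span_seq0 : span_seq v 0
  | span_seqS j c y : span_seq v y -> span_seq v (c *: v j + y).

Lemma span_seq_linear v c x y : span_seq v x -> span_seq v y -> span_seq v (c *: x + y).
Proof.
move=> hx hy; elim: hx => [|j d x' _ ih]; first by rewrite scaler0 add0r.
by rewrite scalerDr scalerA -addrA; exact: span_seqS.
Qed.

Lemma span_seq_gen v j : span_seq v (v j).
Proof. by rewrite -[v j]addr0 -[v j]scale1r; apply/span_seqS/span_seq0. Qed.

Definition adherent (S : V -> Prop) (y : V) :=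
  forall e : R, 0 < e -> exists2 s, S s & nm (y - s) < e.

Lemma adherent_span_subspace v : closed_subspace (adherent (span_seq v)).
Proof.
split.
- by move=> e e0; exists 0; [exact: span_seq0 | rewrite subr0 (hnorm0 hV)].
- move=> c x y hx hy e e0; have c1 : 0 < cmod c + 1 by rewrite ltr_pwDr ?cmod_ge0.
  have e2 : 0 < e / 2 by rewrite divr_gt0.
  have [sx spx hsx] := hx _ (divr_gt0 e2 c1); have [sy spy hsy] := hy _ e2.
  exists (c *: sx + sy); first exact: span_seq_linear.
  have -> : c *: x + y - (c *: sx + sy) = c *: (x - sx) + (y - sy).
    by rewrite scalerBr opprD addrACA.
  apply: le_lt_trans (ler_hnormD hV _ _) _; rewrite (hnormZ hV).
  have : cmod c * nm (x - sx) <= (cmod c + 1) * nm (x - sx).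
    by rewrite ler_wpM2r ?hnorm_ge0 ?lerDl.
  have : (cmod c + 1) * nm (x - sx) < e / 2 by rewrite mulrC -ltr_pdivlMr.
  lra.
- move=> u l hu hl e e0; have e2 : 0 < e / 2 by rewrite divr_gt0.
  have [N hN] := hl _ e2; have [s sps hs] := hu N _ e2.
  exists s => //; have := ler_hdistD hV l (u N) s; rewrite (hnorm_distC hV l (u N)).
  by have := hN N (leqnn N); lra.
Qed.

Lemma ccvg_ip_adherent (w : nat -> V) (K : R) S y : 0 <= K ->
  (forall k z, cmod (ip (w k) z) <= K * nm z) ->
  (forall s, S s -> exists l, ccvg (fun k => ip (w k) s) l) ->
  adherent S y -> exists l, ccvg (fun k => ip (w k) y) l.
Proof.
move=> K0 wK hS hy; apply: ccauchy_cvg; last by exists (K * nm y).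
move=> e e0; have K1 : 0 < K + 1 by rewrite ltr_pwDr.
have [s sps hs] := hy _ (divr_gt0 (divr_gt0 e0 (ltr0Sn _ 2)) K1).
have [l hl] := hS _ sps.
have [N hN] := hl _ (divr_gt0 e0 (ltr0Sn _ 5)).
exists N => a b ha hb.
have Kd : K * nm (y - s) <= e / 3.
  have : K * nm (y - s) <= (K + 1) * nm (y - s) by rewrite ler_wpM2r ?hnorm_ge0 ?lerDl.
  have : (K + 1) * nm (y - s) < e / 3 by rewrite mulrC -ltr_pdivlMr.
  lra.
have t1 := wK a (y - s); have t2 := wK b (y - s).
have t3 := hN a ha; have t4 := hN b hb.
have -> : ip (w a) y - ip (w b) y =
    ip (w a) (y - s) + ((ip (w a) s - l) - (ip (w b) s - l)) - ip (w b) (y - s).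
  by rewrite !(ipBr hV); ring.
have c1 := ler_cmodD (ip (w a) (y - s) + ((ip (w a) s - l) - (ip (w b) s - l)))
                     (- ip (w b) (y - s)).
have c2 := ler_cmodD (ip (w a) (y - s)) ((ip (w a) s - l) - (ip (w b) s - l)).
have c3 := ler_cmodD (ip (w a) s - l) (- (ip (w b) s - l)).
rewrite cmodN in c1; rewrite cmodN in c3; lra.
Qed.

Lemma bounded_ip_diag_subseq (v : nat -> V) (K : R) : 0 <= K ->
  (forall n, nm (v n) <= K) ->
  exists phi, incr phi /\ forall j, exists l, ccvg (fun k => ip (v (phi k)) (v j)) l.
Proof.
move=> K0 hK; apply: diagonal_subseq.
- move=> j s t ti [l hl]; exists l.
  exact: (ccvg_subseq (z := fun k => ip (v (s k)) (v j))) ti hl.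
- by move=> j s m [l hl]; exists l; exact: ccvg_tail hl.
- move=> j s _; apply: (@bolzano_weierstrass_complex _ (fun k => ip (v (s k)) (v j)) (K * K)) => k.
  by apply: le_trans (cauchy_schwarz hV _ _) _; apply: ler_pM; rewrite ?hnorm_ge0.
Qed.

(* Along a diagonal subsequence <v_n, v_j> converges for every j, hence
   <v_n, y> converges on the closed span of the v_j and, by projection onto
   that span, everywhere; Riesz represents the limit. *)
Lemma bounded_wcvg_subseq (v : nat -> V) (K : R) :
  (forall n, nm (v n) <= K) -> exists phi g, incr phi /\ wcvg ip (fun k => v (phi k)) g.
Proof.
move=> hK; have K0 : 0 <= K := le_trans (hnorm_ge0 ip (v 0%N)) (hK 0%N).
have [phi [phii hphi]] := bounded_ip_diag_subseq K0 hK.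
set w := fun k => v (phi k).
have wK k z : cmod (ip (w k) z) <= K * nm z.
  by apply: le_trans (cauchy_schwarz hV _ _) _; apply: ler_wpM2r; [exact: hnorm_ge0 | exact: hK].
have cvg_span s : span_seq v s -> exists l, ccvg (fun k => ip (w k) s) l.
  elim=> [|j c y' _ [l hl]].
    by exists 0; apply: ccvg_ext (ccvg_cst 0) => n; rewrite (ip0r hV).
  have [lj hj] := hphi j; exists (conjc c * lj + l).
  by apply: ccvg_ext (ccvgD (ccvgMl (conjc c) hj) hl) => n; rewrite (ipDr hV) (ipZr hV).
have /choice [L hL] : forall y, exists l, ccvg (fun k => ip (w k) y) l.
  move=> y; have [p [Mp hp]] := orth_proj_exists (adherent_span_subspace v) y.
  have [l hl] := ccvg_ip_adherent K0 wK cvg_span Mp.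
  exists l; apply: ccvg_ext hl => k; apply/esym/eqP; rewrite -subr_eq0 -(ipBr hV).
  rewrite (ip_orthC hV) ?hp // => e e0.
  by exists (w k); [exact: span_seq_gen | rewrite subrr (hnorm0 hV)].
have Llin c x y : L (c *: x + y) = conjc c * L x + L y.
  apply: (ccvg_unique (hL (c *: x + y))).
  by apply: ccvg_ext (ccvgD (ccvgMl (conjc c) (hL x)) (hL y)) => n; rewrite (ipDr hV) (ipZr hV).
have [g hg] : exists g, forall y, L y = ip g y.
  by apply: riesz Llin _; exists K => x; apply: ccvg_cmod_le (hL x) _ => n; exact: wK.
by exists phi, g; split => // y; rewrite -hg; exact: hL.
Qed.

End HilbertSpace.

(** * Operators *)

Section LinearOperator.
Variable R : realType.
Local Notation C := (complex R).
Variables V W : lmodType C.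
Variable dA : V -> Prop.
Variable A : V -> W.
Hypothesis hA : lin_op dA A.

Lemma lin_dom0 : dA 0.
Proof. by case: hA. Qed.

Lemma lin_domL c x y : dA x -> dA y -> dA (c *: x + y).
Proof. by case: hA => _ h hx hy; case: (h c x y hx hy). Qed.

Lemma lin_opL c x y : dA x -> dA y -> A (c *: x + y) = c *: A x + A y.
Proof. by case: hA => _ h hx hy; case: (h c x y hx hy). Qed.

Lemma lin_op0 : A 0 = 0.
Proof.
have := lin_opL 1 lin_dom0 lin_dom0; rewrite scaler0 addr0 scale1r => h.
by apply: (addrI (A 0)); rewrite addr0 -h.
Qed.

Lemma lin_domD x y : dA x -> dA y -> dA (x + y).
Proof. by move=> hx hy; rewrite -[x]scale1r; apply: lin_domL. Qed.

Lemma lin_domZ c x : dA x -> dA (c *: x).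
Proof. by move=> hx; rewrite -[c *: x]addr0; apply: lin_domL hx lin_dom0. Qed.

Lemma lin_domB x y : dA x -> dA y -> dA (x - y).
Proof. by move=> hx hy; rewrite addrC -scaleN1r; apply: lin_domL. Qed.

Lemma lin_opD x y : dA x -> dA y -> A (x + y) = A x + A y.
Proof. by move=> hx hy; have := lin_opL 1 hx hy; rewrite !scale1r. Qed.

Lemma lin_opZ c x : dA x -> A (c *: x) = c *: A x.
Proof. by move=> hx; rewrite -[c *: x]addr0 lin_opL ?lin_op0 ?addr0 //; exact: lin_dom0. Qed.

Lemma lin_opB x y : dA x -> dA y -> A (x - y) = A x - A y.
Proof. by move=> hx hy; rewrite addrC -scaleN1r lin_opL // scaleN1r addrC. Qed.

End LinearOperator.

Section BoundedOperator.
Variable R : realType.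
Local Notation C := (complex R).
Variable V : lmodType C.
Variable ip : V -> V -> C.
Variable b : V -> V.
Hypothesis hb : bounded_op ip b.

Lemma bounded_opL c x y : b (c *: x + y) = c *: b x + b y.
Proof. by case: hb => h _; apply: h. Qed.

Lemma bounded_op0 : b 0 = 0.
Proof.
have := bounded_opL 1 0 0; rewrite scaler0 addr0 scale1r => h.
by apply: (addrI (b 0)); rewrite addr0 -h.
Qed.

Lemma bounded_opB x y : b (x - y) = b x - b y.
Proof. by rewrite addrC -scaleN1r bounded_opL scaleN1r addrC. Qed.

Lemma bounded_op_norm : exists2 M : R, 0 <= M & forall x, hnorm ip (b x) <= M * hnorm ip x.
Proof.
case: hb => _ [M hM]; exists `|M| => // x.
by apply: le_trans (hM x) _; rewrite ler_wpM2r ?sqrtr_ge0 ?ler_norm.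
Qed.

End BoundedOperator.

(** * The range of G *)

Section RangeOfG.
Variable R : realType.
Local Notation C := (complex R).
Variables H0 H1 : lmodType C.
Variable ip0 : H0 -> H0 -> C.
Variable ip1 : H1 -> H1 -> C.
Hypothesis hH0 : is_hilbert ip0.
Hypothesis hH1 : is_hilbert ip1.
Variable dG : H0 -> Prop.
Variable G : H0 -> H1.
Hypothesis hGlin : lin_op dG G.
Hypothesis hGcl : closed_op ip0 ip1 dG G.
Hypothesis hcomp : compact_embedding ip0 ip1 dG G.
Local Notation nm0 := (hnorm ip0).
Local Notation nm1 := (hnorm ip1).
Local Notation rn := (ran dG G).

Definition kernel x := dG x /\ G x = 0.
Definition perp_kernel x := forall k, kernel k -> ip0 x k = 0.

Lemma kernel_closed : closed_subspace ip0 kernel.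
Proof.
split.
- by split; [exact: lin_dom0 hGlin | exact: lin_op0 hGlin].
- move=> c x y [dx Gx] [dy Gy]; split; first exact: (lin_domL hGlin).
  by rewrite (lin_opL hGlin) // Gx Gy scaler0 addr0.
- move=> u l hu hl; apply: hGcl (fun n => (hu n).1) hl _ => e e0.
  by exists 0%N => n _; rewrite (hu n).2 subrr (hnorm0 hH1).
Qed.

Lemma perp_kernelB x y : perp_kernel x -> perp_kernel y -> perp_kernel (x - y).
Proof. by move=> px py k hk; rewrite (ipBl hH0) px // py // subrr. Qed.

Lemma graph_hnorm x :
  hnorm (graph_ip ip0 ip1 G) x = Num.sqrt (nm0 x ^+ 2 + nm1 (G x) ^+ 2).
Proof. by rewrite {1}/hnorm /graph_ip ReD -(hnorm_sqr hH0) -(hnorm_sqr hH1). Qed.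

(* Otherwise there are unit vectors x_n in (ker G)^perp with G x_n -> 0; by
   compactness a subsequence converges to some l, which lies in ker G by
   closedness and in (ker G)^perp, hence l = 0, contradicting nm0 l = 1. *)
Lemma poincare : exists2 Cp : R, 0 <= Cp &
  forall w, dG w -> perp_kernel w -> nm0 w <= Cp * nm1 (G w).
Proof.
apply: contrapT => hno.
have /choice [w hw] : forall n : nat, exists w, [/\ dG w, perp_kernel w &
    n.+1%:R * nm1 (G w) < nm0 w].
  move=> n; apply: contrapT => hn; apply: hno; exists n.+1%:R => // w dw pw.
  by rewrite leNgt; apply/negP => lt; apply: hn; exists w.
have wpos n : 0 < nm0 (w n).
  by have [_ _ h] := hw n; apply: le_lt_trans h; rewrite mulr_ge0 ?hnorm_ge0.
pose x n := ((nm0 (w n))^-1%:C)%C *: w n.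
have dx n : dG (x n) by apply: (lin_domZ hGlin); case: (hw n).
have px n : perp_kernel (x n).
  by have [_ pw _] := hw n; move=> k hk; rewrite (ipZl hH0) pw // mulr0.
have nx n : nm0 (x n) = 1.
  by rewrite (hnormZ hH0) cmod_real ger0_norm ?invr_ge0 ?ltW // mulVf // gt_eqF.
have Gx n : nm1 (G (x n)) < (n.+1%:R)^-1.
  have [dw _ h] := hw n.
  rewrite /x (lin_opZ hGlin) // (hnormZ hH1) cmod_real ger0_norm ?invr_ge0 ?ltW //.
  by rewrite ltr_pdivrMl ?wpos // ltr_pdivlMr ?ltr0Sn // mulrC.
have [phi [l [phii hl]]] : exists phi (l : H0), incr phi /\ ncvg ip0 (fun k => x (phi k)) l.
  apply: hcomp => //; exists 2 => n; rewrite graph_hnorm nx expr1n.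
  have g1 : nm1 (G (x n)) <= 1.
    by apply/ltW/(lt_le_trans (Gx n)); rewrite invf_le1 ?ltr0Sn // (ler_nat _ 1).
  have : nm1 (G (x n)) ^+ 2 <= 1 by rewrite expr_le1 ?hnorm_ge0.
  move=> h2; rewrite -(@ler_pXn2r _ 2) ?nnegrE ?sqrtr_ge0 // sqr_sqrtr; last first.
    by rewrite addr_ge0 // sqr_ge0.
  lra.
have kl : kernel l.
  apply: hGcl (fun k => dx (phi k)) hl _.
  apply: limsup_le0_le (limsup_le0_subseq phii (@limsup_le0_inv R)) => k.
  by rewrite subr0; apply/ltW/Gx.
have l0 : l = 0.
  apply: (ip_def hH0); apply: (ccvg_unique (ccvg_ipl hH0 l hl)).
  by apply: ccvg_ext (ccvg_cst 0) => k; rewrite px.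
move: hl; rewrite l0 => /(_ (1/2)); rewrite divr_gt0 // => /(_ isT) [N hN].
by have := hN N (leqnn N); rewrite subr0 nx; lra.
Qed.

Lemma ran_perp_preimage y : rn y -> exists x, [/\ dG x, perp_kernel x & G x = y].
Proof.
move=> [x0 [dx0 <-]]; have [p [[dp Gp] hp]] := orth_proj_exists hH0 kernel_closed x0.
exists (x0 - p); split; first exact: (lin_domB hGlin).
  by move=> k hk; exact: hp.
by rewrite (lin_opB hGlin) // Gp subr0.
Qed.

Lemma perp_kernel_inj x x' : dG x -> dG x' -> perp_kernel x -> perp_kernel x' ->
  G x = G x' -> x = x'.
Proof.
move=> dx dx' px px' e; apply/eqP; rewrite -subr_eq0; apply/eqP; apply: (ip_def hH0).
apply: perp_kernelB => //; split; first exact: (lin_domB hGlin).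
by rewrite (lin_opB hGlin) // e subrr.
Qed.

(* By the Poincare inequality, the perpendicular preimages of a Cauchy sequence
   in ran G are Cauchy; closedness of G puts their limit's image in ran G. *)
Lemma ran_closed : closed_subspace ip1 rn.
Proof.
have [Cp Cp0 hCp] := poincare.
split.
- by exists 0; split; [exact: lin_dom0 hGlin | exact: lin_op0 hGlin].
- move=> c _ _ [x [dx <-]] [y [dy <-]]; exists (c *: x + y).
  by split; [exact: (lin_domL hGlin) | exact: (lin_opL hGlin)].
- move=> u l hu hl; have /choice [x hx] := fun n => ran_perp_preimage (hu n).
  have [x' hx'] : exists x', ncvg ip0 x x'.
    apply: (hcauchy_cvg hH0) => e e0; have C1 : 0 < Cp + 1 by rewrite ltr_pwDr.
    have [N hN] := hl _ (divr_gt0 (divr_gt0 e0 C1) (ltr0Sn _ 1)).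
    exists N => a b ha hb; have [dxa pxa Gxa] := hx a; have [dxb pxb Gxb] := hx b.
    have := hCp _ (lin_domB hGlin dxa dxb) (perp_kernelB pxa pxb).
    rewrite (lin_opB hGlin) // Gxa Gxb => h1.
    have := ler_hdistD hH1 (u a) l (u b); rewrite [nm1 (l - u b)](hnorm_distC hH1) => h2.
    have h5 : nm1 (u a - u b) < e / (Cp + 1) by have := hN a ha; have := hN b hb; lra.
    have : (Cp + 1) * nm1 (u a - u b) < e by rewrite mulrC -ltr_pdivlMr.
    have : Cp * nm1 (u a - u b) <= (Cp + 1) * nm1 (u a - u b).
      by rewrite ler_wpM2r ?hnorm_ge0 ?lerDl.
    lra.
  have dx n : dG (x n) by case: (hx n).
  have Gxl : ncvg ip1 (fun n => G (x n)) l.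
    by apply: limsup_le0_le hl => n; case: (hx n) => _ _ ->.
  by have [dx' Gx'] := hGcl dx hx' Gxl; exists x'.
Qed.

Local Notation Pr := (proj_ran ip1 dG G).

Lemma proj_ran_spec y : rn (Pr y) /\ forall q, rn q -> ip1 (y - Pr y) q = 0.
Proof. exact: (xgetPex 0 (orth_proj_exists hH1 ran_closed y)). Qed.

Lemma proj_ran_in y : rn (Pr y).
Proof. exact: (proj_ran_spec y).1. Qed.

Lemma proj_ran_orth y q : rn q -> ip1 (y - Pr y) q = 0.
Proof. exact: (proj_ran_spec y).2. Qed.

Lemma proj_ran_eq y p : rn p -> (forall q, rn q -> ip1 (y - p) q = 0) -> Pr y = p.
Proof.
move=> rp hp; apply/eqP; rewrite -subr_eq0; apply/eqP; apply: (ip_def hH1).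
have rd : rn (Pr y - p) := closed_subspaceB ran_closed (proj_ran_in y) rp.
have e : Pr y - p = (y - p) - (y - Pr y) by rewrite opprB [RHS]addrC [RHS]addrA subrK.
by rewrite {1}e (ipBl hH1) hp // proj_ran_orth // subrr.
Qed.

Lemma proj_ran_id y : rn y -> Pr y = y.
Proof. by move=> ry; apply: proj_ran_eq => // q _; rewrite subrr (ip0l hH1). Qed.

Lemma proj_ran_ip y q : rn q -> ip1 (Pr y) q = ip1 y q.
Proof. by move=> rq; apply/eqP; rewrite eq_sym -subr_eq0 -(ipBl hH1) proj_ran_orth. Qed.

Lemma proj_ranL c x y : Pr (c *: x + y) = c *: Pr x + Pr y.
Proof.
have [_ rlin _] := ran_closed.
apply: proj_ran_eq => [|q rq]; first by apply: rlin; apply: proj_ran_in.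
have -> : c *: x + y - (c *: Pr x + Pr y) = c *: (x - Pr x) + (y - Pr y).
  by rewrite scalerBr opprD addrACA.
by rewrite (ip_linear hH1) !proj_ran_orth // mulr0 addr0.
Qed.

Lemma proj_ranB x y : Pr (x - y) = Pr x - Pr y.
Proof. by rewrite addrC -scaleN1r proj_ranL scaleN1r addrC. Qed.

Lemma proj_ran_le y : nm1 (Pr y) <= nm1 y.
Proof.
have := hnormD_sqr hH1 (Pr y) (y - Pr y); rewrite addrC subrK.
rewrite (ip_orthC hH1 (proj_ran_orth _ (proj_ran_in y))) /= mulr0 addr0 => e.
by rewrite -(@ler_pXn2r _ 2) ?nnegrE ?hnorm_ge0 // e lerDl sqr_ge0.
Qed.

(* xget returns the junk value 0 outside ran G. *)
Definition Ginv y := xget 0 (fun x => [/\ dG x, perp_kernel x & G x = y]).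

Lemma Ginv_spec y : rn y -> [/\ dG (Ginv y), perp_kernel (Ginv y) & G (Ginv y) = y].
Proof. by move=> /ran_perp_preimage; exact: xgetPex. Qed.

Lemma Ginv_eq x : dG x -> perp_kernel x -> Ginv (G x) = x.
Proof.
move=> dx px; have rx : rn (G x) by exists x.
by have [d1 p1 g1] := Ginv_spec rx; apply: perp_kernel_inj.
Qed.

Lemma GinvL c x y : rn x -> rn y -> Ginv (c *: x + y) = c *: Ginv x + Ginv y.
Proof.
move=> rx ry; have [dx px gx] := Ginv_spec rx; have [dy py gy] := Ginv_spec ry.
rewrite -{1}gx -{1}gy -(lin_opL hGlin) //.
apply: Ginv_eq; first exact: (lin_domL hGlin).
by move=> k hk; rewrite (ip_linear hH0) px // py // mulr0 addr0.
Qed.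

Lemma Ginv_bounded : exists2 Cp : R, 0 <= Cp & forall y, rn y -> nm0 (Ginv y) <= Cp * nm1 y.
Proof.
have [Cp Cp0 hCp] := poincare; exists Cp => // y /Ginv_spec [dx px Gx].
by rewrite -{2}Gx; exact: hCp.
Qed.

(* The functional y |-> <z, Ginv (Pr y)> is bounded and antilinear, so by
   Riesz <Ginv v_k, z> = <v_k, r> for some r. *)
Lemma Ginv_wcvg_dom (v : nat -> H1) g : (forall k, rn (v k)) -> rn g -> wcvg ip1 v g ->
  wcvg_dom ip0 ip1 dG G (fun k => Ginv (v k)) (Ginv g).
Proof.
move=> rv rg hv; have [Cp Cp0 hCp] := Ginv_bounded.
have weak0 z : ccvg (fun k => ip0 (Ginv (v k)) z) (ip0 (Ginv g) z).
  have [r hr] : exists r, forall y, ip0 z (Ginv (Pr y)) = ip1 r y.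
    apply: (riesz hH1 (L := fun y => ip0 z (Ginv (Pr y)))) => [c x y|].
      by rewrite proj_ranL (GinvL _ (proj_ran_in x) (proj_ran_in y)) (ipDr hH0) (ipZr hH0).
    exists (nm0 z * Cp) => x; apply: le_trans (cauchy_schwarz hH0 _ _) _.
    rewrite -mulrA ler_wpM2l ?hnorm_ge0 //; apply: le_trans (hCp _ (proj_ran_in _)) _.
    by rewrite ler_wpM2l // proj_ran_le.
  have ipL y : rn y -> ip0 (Ginv y) z = ip1 y r.
    by move=> ry; rewrite (ipC hH0) -{1}(proj_ran_id ry) hr -(ipC hH1).
  by rewrite ipL //; apply: ccvg_ext (hv r) => k; rewrite ipL.
split; first by move=> k; case: (Ginv_spec (rv k)).
split; first by case: (Ginv_spec rg).
move=> w dw; apply: ccvgD; first exact: weak0.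
have [_ _ ->] := Ginv_spec rg.
by apply: ccvg_ext (hv (G w)) => k; case: (Ginv_spec (rv k)) => _ _ ->.
Qed.

Section Compression.
Variable b : H1 -> H1.
Variable mu : R.
Hypothesis hb : bounded_op ip1 b.
Hypothesis hmu : 0 < mu.
Hypothesis hre : re_ge ip1 b mu.
Local Notation Binv := (compr_inv ip1 dG G b).

Lemma compr_coercive v : rn v -> mu * nm1 v <= nm1 (Pr (b v)).
Proof.
move=> rv; have h := hre v.
rewrite -(proj_ran_ip _ rv) in h.
have h2 := le_trans (ler_norm _) (abs_Re_le_cmod (ip1 (Pr (b v)) v)).
have h3 : mu * nm1 v ^+ 2 <= nm1 (Pr (b v)) * nm1 v.
  by apply: le_trans (le_trans h h2) (cauchy_schwarz hH1 _ _).
have [v0|vp] := eqVneq (nm1 v) 0; first by rewrite v0 mulr0 hnorm_ge0.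
have vpos : 0 < nm1 v by rewrite lt_def vp hnorm_ge0.
by move: h3; rewrite expr2 mulrA ler_pM2r.
Qed.

Lemma comprB x y : Pr (b (x - y)) = Pr (b x) - Pr (b y).
Proof. by rewrite (bounded_opB hb) (proj_ranB). Qed.

Lemma compr_inj v v' : rn v -> rn v' -> Pr (b v) = Pr (b v') -> v = v'.
Proof.
move=> rv rv' e; apply/eqP; rewrite -subr_eq0; apply/eqP; apply: (hnorm_eq0 hH1).
have := compr_coercive (closed_subspaceB ran_closed rv rv').
rewrite comprB e subrr (hnorm0 hH1) => h.
by apply/eqP; rewrite eq_le hnorm_ge0 andbT -(pmulr_rle0 _ hmu).
Qed.

Lemma compr_image_closed : closed_subspace ip1 (fun z => exists2 v, rn v & z = Pr (b v)).
Proof.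
have [Mb Mb0 hMb] := bounded_op_norm hb.
split.
- exists 0; first exact: closed_subspace0 ran_closed.
  by rewrite (bounded_op0 hb) (proj_ran_id (closed_subspace0 ran_closed)).
- move=> c _ _ [v rv ->] [w rw ->]; exists (c *: v + w).
    by case: ran_closed => _ hlin _; apply: hlin.
  by rewrite (bounded_opL hb) (proj_ranL).
- move=> u l hu hl; have /choice [v hv] : forall n, exists v, rn v /\ u n = Pr (b v).
    by move=> n; have [v] := hu n; exists v.
  have [v' hv'] : exists v', ncvg ip1 v v'.
    apply: (hcauchy_cvg hH1) => e e0; have [N hN] := hl _ (divr_gt0 (mulr_gt0 e0 hmu) (ltr0Sn _ 1)).
    exists N => m n hm hn.
    have := compr_coercive (closed_subspaceB ran_closed (hv m).1 (hv n).1).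
    rewrite comprB -(hv m).2 -(hv n).2 => h1.
    have := ler_hdistD hH1 (u m) l (u n); rewrite [nm1 (l - u n)](hnorm_distC hH1) => h2.
    have : mu * nm1 (v m - v n) < mu * e by have := hN m hm; have := hN n hn; lra.
    by rewrite ltr_pM2l.
  have rv' : rn v' by case: ran_closed => _ _; apply; [exact: (fun n => (hv n).1) | exact: hv'].
  exists v' => //; apply: (ncvg_unique hH1 hl).
  apply: limsup_le0_le (limsup_le0Z Mb0 hv') => n; rewrite (hv n).2 -comprB.
  by apply: le_trans (proj_ran_le _) _; exact: hMb.
Qed.

(* Lax-Milgram: a vector r of ran G orthogonal to the (closed) image satisfies
   mu |r|^2 <= Re <Pr (b r), r> = 0. *)
Lemma compr_surj x : rn x -> exists v, rn v /\ Pr (b v) = x.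
Proof.
move=> rx; have [_ [[v rv ->] hz]] := orth_proj_exists hH1 compr_image_closed x.
set r := x - Pr (b v).
have rr : rn r := closed_subspaceB ran_closed rx (proj_ran_in _).
have : mu * nm1 r ^+ 2 <= 0.
  have := hre r; rewrite -(proj_ran_ip _ rr).
  by rewrite (ip_orthC hH1 (hz _ _)) //; exists r.
rewrite pmulr_rle0 // => r0; exists v; split => //.
have : nm1 r ^+ 2 == 0 by rewrite eq_le r0 sqr_ge0.
by rewrite expf_eq0 /= => /eqP /(hnorm_eq0 hH1) /eqP; rewrite subr_eq0 eq_sym => /eqP.
Qed.

Lemma compr_inv_spec x : rn x -> rn (Binv x) /\ Pr (b (Binv x)) = x.
Proof. by move=> /compr_surj; exact: xgetPex. Qed.

Lemma compr_inv_eq x v : rn v -> Pr (b v) = x -> Binv x = v.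
Proof.
move=> rv e; have rx : rn x by rewrite -e; exact: proj_ran_in.
by have [r1 e1] := compr_inv_spec rx; apply: compr_inj => //; rewrite e1.
Qed.

Lemma compr_inv_le x : rn x -> mu * nm1 (Binv x) <= nm1 x.
Proof. by move=> rx; have [r1 e1] := compr_inv_spec rx; rewrite -{2}e1; exact: compr_coercive. Qed.

Lemma compr_invB x y : rn x -> rn y -> Binv (x - y) = Binv x - Binv y.
Proof.
move=> rx ry; have [r1 e1] := compr_inv_spec rx; have [r2 e2] := compr_inv_spec ry.
by apply: compr_inv_eq; [exact: (closed_subspaceB ran_closed r1 r2) | rewrite comprB e1 e2].
Qed.

Lemma compr_inv_ip_lipschitz x x' y : rn x -> rn x' ->
  mu * cmod (ip1 (Binv x) y - ip1 (Binv x') y) <= nm1 (x - x') * nm1 y.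
Proof.
move=> rx rx'; rewrite -(ipBl hH1) -compr_invB //.
have rxx := closed_subspaceB ran_closed rx rx'.
apply: le_trans (ler_wpM2l (ltW hmu) (cauchy_schwarz hH1 _ _)) _.
by rewrite mulrA ler_wpM2r ?hnorm_ge0 ?compr_inv_le.
Qed.

Lemma compr_inv_ip_near x x' y e : rn x -> rn x' ->
  nm1 (x - x') < e * mu / (nm1 y + 1) ->
  cmod (ip1 (Binv x) y - ip1 (Binv x') y) <= e.
Proof.
move=> rx rx' hxx; have := compr_inv_ip_lipschitz y rx rx'.
have Y1 : 0 < nm1 y + 1 by rewrite ltr_pwDr ?hnorm_ge0.
rewrite ltr_pdivlMr // in hxx.
have : nm1 (x - x') * nm1 y <= mu * e.
  by have := hnorm_ge0 ip1 (x - x'); have := hnorm_ge0 ip1 y; nra.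
by move=> h1 h2; rewrite -(ler_pM2l hmu); exact: le_trans h2 h1.
Qed.

End Compression.

Section BoundaryConditions.
Variable dD : H1 -> Prop.
Variable D : H1 -> H0.
Hypothesis hDlin : lin_op dD D.
Hypothesis hDdense : densely_defined ip1 dD.
Hypothesis hadj : forall y z, adj_graph ip0 ip1 dG G y z -> dD y /\ D y = - z.

Lemma orth_ran_kerD r : (forall q, rn q -> ip1 r q = 0) -> dD r /\ D r = 0.
Proof.
move=> hr; rewrite -oppr0; apply: hadj => z dz.
by rewrite (ip0r hH0) (ip_orthC hH1) ?hr //; exists z.
Qed.

Lemma ran_domD_approx x e : rn x -> 0 < e -> exists x', [/\ rn x', dD x' & nm1 (x - x') < e].
Proof.
move=> rx e0; have [d [dd hd]] := hDdense x e0.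
exists (Pr d); split; first exact: proj_ran_in.
  have [dr _] := orth_ran_kerD (proj_ran_orth d).
  have -> : Pr d = d - (d - Pr d) by rewrite opprB addrC subrK.
  exact: (lin_domB hDlin).
by rewrite -{1}(proj_ran_id rx) -proj_ranB; exact: le_lt_trans (proj_ran_le _) hd.
Qed.

Variables (a : H1 -> H1) (an : nat -> H1 -> H1) (mu : R).
Hypothesis ha : bounded_op ip1 a.
Hypothesis han : forall n, bounded_op ip1 (an n).
Hypothesis hmu : 0 < mu.
Hypothesis hrea : re_ge ip1 a mu.
Hypothesis hren : forall n, re_ge ip1 (an n) mu.
Hypothesis hcv : cvg_indep_bc ip0 ip1 dG G dD D an a.

(* Along a weakly convergent subsequence v_m -> g, a_m v_m - x is orthogonal
   to ran G, hence in ker D, so -D (a_m v_m) = -D x; convergence independent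
   of the boundary conditions gives a_m v_m -> a g weakly, whence
   Pr (a g) = x. *)
Lemma compr_inv_wcvg_domD x : rn x -> dD x ->
  wcvg ip1 (fun n => compr_inv ip1 dG G (an n) x) (compr_inv ip1 dG G a x).
Proof.
move=> rx dx y; apply: ccvg_subseq_subseq => s si.
set v := fun n => compr_inv ip1 dG G (an n) x.
have rv n : rn (v n) := (compr_inv_spec (han n) hmu (hren n) rx).1.
have Pav n : Pr (an n (v n)) = x := (compr_inv_spec (han n) hmu (hren n) rx).2.
have [psi [g [psii hg]]] : exists psi g, incr psi /\ wcvg ip1 (fun k => v (s (psi k))) g.
  apply: (bounded_wcvg_subseq hH1 (v := fun n => v (s n)) (K := nm1 x / mu)) => k.
  by rewrite ler_pdivlMr // mulrC compr_inv_le.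
exists psi; split => //; set m := fun k => s (psi k).
have rg : rn g := closed_subspace_wclosed hH1 ran_closed (fun k => rv _) hg.
have hD k : dD (an (m k) (G (Ginv (v (m k))))) /\
            - D (an (m k) (G (Ginv (v (m k))))) = - D x.
  have [_ _ ->] := Ginv_spec (rv (m k)).
  have [dr Dr] := orth_ran_kerD (proj_ran_orth (an (m k) (v (m k)))).
  rewrite Pav in dr Dr.
  have -> : an (m k) (v (m k)) = x + (an (m k) (v (m k)) - x) by rewrite addrC subrK.
  by split; [exact: (lin_domD hDlin) | rewrite (lin_opD hDlin) // Dr addr0].
have cst : wcvg ip0 (fun _ => - D x) (- D x) by move=> w; exact: ccvg_cst.
have := hcv (incr_comp si psii) cst (Ginv_wcvg_dom (fun k => rv (m k)) rg hg) hD.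
move=> hag; have [_ _ Gg] := Ginv_spec rg; rewrite Gg in hag.
suff /(compr_inv_eq ha hmu hrea rg) -> : Pr (a g) = x by exact: hg.
apply: proj_ran_eq => // q rq; rewrite (ipBl hH1); apply/eqP; rewrite subr_eq0; apply/eqP.
apply: (ccvg_unique (hag q)); apply: ccvg_ext (ccvg_cst _) => k.
by have [_ _ ->] := Ginv_spec (rv (m k)); rewrite -(proj_ran_ip (an (m k) (v (m k))) rq) Pav.
Qed.

End BoundaryConditions.

End RangeOfG.

Theorem proposition6p2 (R : realType) (H0 H1 : lmodType (complex R))
  (ip0 : H0 -> H0 -> complex R) (ip1 : H1 -> H1 -> complex R)
  (dG : H0 -> Prop) (G : H0 -> H1) (dD : H1 -> Prop) (D : H1 -> H0)
  (a : H1 -> H1) (an : nat -> H1 -> H1) (mu : R) :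
  is_hilbert ip0 -> is_hilbert ip1 ->
  densely_defined_closed ip0 ip1 dG G ->
  densely_defined_closed ip1 ip0 dD D ->
  (* -G^* \subset D *)
  (forall (y : H1) (z : H0), adj_graph ip0 ip1 dG G y z -> dD y /\ D y = - z) ->
  compact_embedding ip0 ip1 dG G ->
  bounded_op ip1 a -> (forall n, bounded_op ip1 (an n)) ->
  0 < mu ->
  (forall n, re_ge ip1 (an n) mu) -> re_ge ip1 a mu ->
  cvg_indep_bc ip0 ip1 dG G dD D an a ->
  forall x y : H1, ran dG G x -> ran dG G y ->
    ccvg (fun n => ip1 (compr_inv ip1 dG G (an n) x) y) (ip1 (compr_inv ip1 dG G a x) y).
Proof.
move=> hH0 hH1 [hGlin _ hGcl] [hDlin hDdense _] hadj hcomp ha han hmu hren hrea hcv.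
move=> x y rx _; apply: ccvg_approx => e e0.
have d0 : 0 < e * mu / (hnorm ip1 y + 1) by rewrite divr_gt0 ?mulr_gt0 ?ltr_pwDr ?hnorm_ge0.
have [x' [rx' dx' hxx']] := ran_domD_approx hH0 hH1 hGlin hGcl hcomp hDlin hDdense hadj rx d0.
exists (fun n => ip1 (compr_inv ip1 dG G (an n) x') y), (ip1 (compr_inv ip1 dG G a x') y).
split.
- exact: (compr_inv_wcvg_domD hH0 hH1 hGlin hGcl hcomp hDlin hadj
           ha han hmu hrea hren hcv rx' dx' y).
- exact: (compr_inv_ip_near hH0 hH1 hGlin hGcl hcomp ha hmu hrea rx rx' hxx').
- move=> n.
  exact: (compr_inv_ip_near hH0 hH1 hGlin hGcl hcomp (han n) hmu (hren n) rx rx' hxx').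
Qed.
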